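(* Let $f\in C^\infty(\mathbb{R})$ with $f'(0)=0$, let $u_0\in C^\infty(\mathbb{R})$ be bounded with bounded derivatives, and let $u\in C^\infty((0,\infty)\times\mathbb{R},\mathbb{R})$ be the smooth solution of $u_t=u_{xx}+f'(u)u_x$, $u(0,\cdot)=u_0$. Assume there exists $(t_0,\xi_0)\in(0,\infty)\times\mathbb{R}$ such that $$u(t_0,\xi_0)=0,\quad u_x(t_0,\xi_0)=0,\quad u_{xx}(t_0,\xi_0)=0,\quad u_{xxx}(t_0,\xi_0)\neq0.$$ Then there exist three roots of $u(t,\cdot)$ near $\xi_0$ for $t<t_0$ near $t_0$ and one root near $\xi_0$ for $t>t_0$ near $t_0$. Two of the roots, $\xi_{1,2}(t)$, are not continued for $t>t_0$ and satisfy $$\xi_{1,2}(t)-\xi_0=\pm\sqrt{6(t_0-t)}+\mathcal{O}(t_0-t),\qquad u_x(t,\xi_{1,2}(t))=2u_{xxx}(t_0,\xi_0)(t_0-t)+\mathcal{O}((t_0-t)^{3/2})$$ as $t\to t_0^-$, while the third root $\xi(t)$ is continued for $t>t_0$ and satisfies $$\xi(t)-\xi_0=\frac{u_{tt}(t_0,\xi_0)}{2u_{xxx}(t_0,\xi_0)}(t_0-t)+\mathcal{O}((t_0-t)^2),\qquad u_x(t,\xi(t))=u_{xxx}(t_0,\xi_0)(t-t_0)+\mathcal{O}((t_0-t)^2)$$ as $t\to t_0$. *)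

From Stdlib Require Import Reals List.
From Coquelicot Require Import Coquelicot.
Open Scope R_scope.

Definition smooth1 (f : R -> R) : Prop :=
  forall (n : nat) (x : R), ex_derive (Derive_n f n) x.

Definition smooth_bounded (g : R -> R) : Prop :=
  smooth1 g /\ forall n : nat, exists M : R, forall x : R, Rabs (Derive_n g n x) <= M.

Definition partial_t (u : R -> R -> R) : R -> R -> R :=
  fun t x => Derive (fun s => u s x) t.
Definition partial_x (u : R -> R -> R) : R -> R -> R :=
  fun t x => Derive (fun y => u t y) x.

(* Iterated partial derivative along a word: true = d/dt, false = d/dx
   (the head of the list is applied last). *)
Fixpoint pderiv (w : list bool) (u : R -> R -> R) : R -> R -> R :=
  match w with
  | nil => u
  | b :: w' => if b then partial_t (pderiv w' u) else partial_x (pderiv w' u)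
  end.

Definition smooth_halfplane (u : R -> R -> R) : Prop :=
  forall (w : list bool) (t x : R), 0 < t ->
    ex_derive (fun s => pderiv w u s x) t /\
    ex_derive (fun y => pderiv w u t y) x /\
    continuous (fun p : R * R => pderiv w u (fst p) (snd p)) (t, x).

From Stdlib Require Import Reals Lra Psatz List ClassicalEpsilon.
From Coquelicot Require Import Coquelicot.
Open Scope R_scope.
Import ListNotations.

(* At the fold point the equation gives u_t = u_xx + f'(u) u_x = 0 and, differentiated in x,
   u_tx = u_xxx = a.  With tau = t - t0 and X = x - xi0, Taylor's formula therefore gives
     u   = b tau^2 / 2 + a tau X + a X^3 / 6
           + O(|tau|^3 + tau^2 |X| + |tau| X^2 + |tau| |X|^3 + X^4),
     u_x = a tau + a X^2 / 2 + O(tau^2 + |tau| |X| + |tau| X^2 + |X|^3),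
   and replacing u by -u we may assume a > 0.  For tau < 0 the cubic a X (X^2 + 6 tau) / 6
   changes sign across X = +-sqrt(6 (t0 - t)), and on the scale X ~ tau the part
   b tau^2 / 2 + a tau X changes sign across X = b (t0 - t) / (2 a); the intermediate value
   theorem puts a zero of u within the claimed error of each.  As u_xxx > 0 near the point,
   Rolle's theorem excludes a fourth zero.  For tau >= 0 the expansion of u_x gives
   u_x >= 5 a tau / 8 + a X^2 / 8, so by Rolle two zeros can only occur for tau = 0 on both
   sides of X = 0, whereas X = 0 is itself the zero on the middle branch. *)

Lemma continuity_pt_of_is_derive (g : R -> R) x l :
  is_derive g x l -> continuity_pt g x.
Proof.
  intro H. apply continuity_pt_filterlim.
  apply (ex_derive_continuous (K := R_AbsRing) (V := R_NormedModule)).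
  now exists l.
Qed.

Lemma mvt_pow_bound (g g' : R -> R) (c r K : R) (n : nat) :
  0 <= K ->
  (forall y, Rabs (y - c) < r -> is_derive g y (g' y)) ->
  g c = 0 ->
  (forall y, Rabs (y - c) < r -> Rabs (g' y) <= K * Rabs (y - c) ^ n) ->
  forall y, Rabs (y - c) < r -> Rabs (g y) <= K * Rabs (y - c) ^ S n.
Proof.
  intros HK Hd Hc Hb y Hy.
  assert (Hin : forall z, Rmin c y <= z <= Rmax c y -> Rabs (z - c) <= Rabs (y - c)).
  { intros z Hz. unfold Rmin, Rmax in Hz.
    destruct (Rle_dec c y); unfold Rabs; repeat destruct Rcase_abs; lra. }
  destruct (MVT_gen g c y g') as [z [Hz Heq]].
  - intros z Hz. apply Hd.
    specialize (Hin z (conj (Rlt_le _ _ (proj1 Hz)) (Rlt_le _ _ (proj2 Hz)))). lra.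
  - intros z Hz. apply continuity_pt_of_is_derive with (g' z). apply Hd. specialize (Hin z Hz). lra.
  - rewrite Hc, Rminus_0_r in Heq. rewrite Heq, Rabs_mult, <- tech_pow_Rmult.
    replace (K * (Rabs (y - c) * Rabs (y - c) ^ n))
      with (K * Rabs (y - c) ^ n * Rabs (y - c)) by ring.
    apply Rmult_le_compat_r; [apply Rabs_pos|].
    apply Rle_trans with (K * Rabs (z - c) ^ n).
    + apply Hb. specialize (Hin z Hz). lra.
    + apply Rmult_le_compat_l; auto. apply pow_incr. split; [apply Rabs_pos | auto].
Qed.

Lemma rolle_is_derive (g g' : R -> R) p q :
  p < q -> (forall y, p <= y <= q -> is_derive g y (g' y)) -> g p = g q ->
  exists z, p < z < q /\ g' z = 0.
Proof.
  intros Hpq Hd Heq.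
  assert (pr : forall y, p < y < q -> derivable_pt g y).
  { intros y Hy. exists (g' y). apply is_derive_Reals, Hd. lra. }
  destruct (Rolle g p q pr) as [z [Hz Hg']]; auto.
  - intros y Hy. apply continuity_pt_of_is_derive with (g' y), Hd, Hy.
  - exists z. split; auto. rewrite <- Hg'. symmetry. apply derive_pt_eq_0, is_derive_Reals, Hd. lra.
Qed.

Lemma no_four_zeros (g g1 g2 g3 : R -> R) x1 x2 x3 x4 :
  x1 < x2 -> x2 < x3 -> x3 < x4 ->
  (forall y, x1 <= y <= x4 ->
     is_derive g y (g1 y) /\ is_derive g1 y (g2 y) /\ is_derive g2 y (g3 y)) ->
  (forall y, x1 < y < x4 -> g3 y <> 0) ->
  g x1 = 0 -> g x2 = 0 -> g x3 = 0 -> g x4 = 0 -> False.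
Proof.
  intros L12 L23 L34 Hd H3 Z1 Z2 Z3 Z4.
  destruct (rolle_is_derive g g1 x1 x2) as [y1 [Hy1 E1]];
    [lra | intros y Hy; apply Hd; lra | congruence |].
  destruct (rolle_is_derive g g1 x2 x3) as [y2 [Hy2 E2]];
    [lra | intros y Hy; apply Hd; lra | congruence |].
  destruct (rolle_is_derive g g1 x3 x4) as [y3 [Hy3 E3]];
    [lra | intros y Hy; apply Hd; lra | congruence |].
  destruct (rolle_is_derive g1 g2 y1 y2) as [z1 [Hz1 F1]];
    [lra | intros y Hy; apply Hd; lra | congruence |].
  destruct (rolle_is_derive g1 g2 y2 y3) as [z2 [Hz2 F2]];
    [lra | intros y Hy; apply Hd; lra | congruence |].
  destruct (rolle_is_derive g2 g3 z1 z2) as [w [Hw G]];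
    [lra | intros y Hy; apply Hd; lra | congruence |].
  apply (H3 w); [lra | exact G].
Qed.

Lemma choice_on (P : R -> Prop) (Q : R -> R -> Prop) :
  (forall t, P t -> exists z, Q t z) -> exists f : R -> R, forall t, P t -> Q t (f t).
Proof.
  intros H.
  assert (H' : forall t, exists z, P t -> Q t z).
  { intro t. destruct (excluded_middle_informative (P t)) as [Ht | Ht].
    - destruct (H t Ht) as [z Hz]. eauto.
    - exists 0. tauto. }
  exists (fun t => proj1_sig (constructive_indefinite_description _ (H' t))).
  intro t. exact (proj2_sig (constructive_indefinite_description _ (H' t))).
Qed.

Lemma Rabs_mult_le (u v B : R) : Rabs u <= B -> Rabs (u * v) <= B * Rabs v.
Proof. intros H. rewrite Rabs_mult. apply Rmult_le_compat_r; [apply Rabs_pos | exact H]. Qed.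

Lemma Rabs_sum4_le (u1 u2 u3 u4 : R) :
  Rabs (u1 + u2 + u3 + u4) <= Rabs u1 + Rabs u2 + Rabs u3 + Rabs u4.
Proof.
  pose proof (Rabs_triang (u1 + u2 + u3) u4). pose proof (Rabs_triang (u1 + u2) u3).
  pose proof (Rabs_triang u1 u2). lra.
Qed.

Lemma Rabs_pow_div_le (X : R) (n : nat) (c : R) : 1 <= c -> Rabs (X ^ n / c) <= Rabs X ^ n.
Proof.
  intros Hc. unfold Rdiv. rewrite Rabs_mult, <- RPow_abs, Rabs_inv, (Rabs_pos_eq c) by lra.
  pose proof (pow_le (Rabs X) n (Rabs_pos X)).
  rewrite <- (Rmult_1_r (Rabs X ^ n)) at 2. apply Rmult_le_compat_l; [lra|].
  rewrite <- Rinv_1. apply Rinv_le_contravar; lra.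
Qed.

Lemma Rabs_between c e x1 x4 w :
  Rabs (x1 - c) < e -> Rabs (x4 - c) < e -> x1 <= w <= x4 -> Rabs (w - c) < e.
Proof. unfold Rabs; repeat destruct Rcase_abs; intros; lra. Qed.

Lemma sqrt_sqr_pos q : 0 < q -> 0 < sqrt q /\ sqrt q ^ 2 = q.
Proof. intros Hq. split; [now apply sqrt_lt_R0 | apply pow2_sqrt; lra]. Qed.

Lemma sqrt_6_bounds q : 0 <= q ->
  sqrt (6 * q) ^ 2 = 6 * q /\ 2 * sqrt q <= sqrt (6 * q) <= 3 * sqrt q.
Proof.
  intros Hq. split; [apply pow2_sqrt; lra|]. rewrite sqrt_mult by lra.
  pose proof (sqrt_sqrt 6 ltac:(lra)). pose proof (sqrt_pos 6). pose proof (sqrt_pos q).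
  assert (2 <= sqrt 6 <= 3) by (split; nra). split; nra.
Qed.

Lemma cubic_sign_near_root a e r s k :
  0 < a -> (e = 1 \/ e = -1) -> 0 <= s -> r ^ 2 = 6 * s -> 2 * sqrt s <= r -> 0 <= k <= sqrt s ->
  a * k * s / 2 <= a * (e * r + k) * ((e * r + k) ^ 2 - 6 * s) / 6 /\
  a * (e * r - k) * ((e * r - k) ^ 2 - 6 * s) / 6 <= - (a * k * s / 2).
Proof.
  intros Ha He Hs Hr2 Hr Hk. pose proof (sqrt_pos s). pose proof (sqrt_sqrt s Hs).
  rewrite <- Hr2.
  assert (Hp : 3 * s <= (r + e * k) * (2 * r + e * k) /\ 3 * s <= (r - e * k) * (2 * r - e * k))
    by (destruct He as [-> | ->]; split; nra).
  replace (a * (e * r + k) * ((e * r + k) ^ 2 - r ^ 2) / 6)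
    with (a * k * ((r + e * k) * (2 * r + e * k)) / 6) by (destruct He as [-> | ->]; field).
  replace (a * (e * r - k) * ((e * r - k) ^ 2 - r ^ 2) / 6)
    with (- (a * k * ((r - e * k) * (2 * r - e * k)) / 6)) by (destruct He as [-> | ->]; field).
  assert (0 <= a * k) by nra. split; nra.
Qed.

Definition taylor_poly (d : nat -> R -> R) (n : nat) (c y : R) : R :=
  sum_f_R0 (fun k => d k c * (y - c) ^ k / INR (Factorial.fact k)) n.

Lemma taylor_poly_center d n c : taylor_poly d n c c = d 0%nat c.
Proof.
  induction n as [|n IH]; unfold taylor_poly in *.
  - simpl. field.
  - rewrite tech5, IH, Rminus_diag, pow_i by lia. unfold Rdiv. ring.
Qed.

Lemma is_derive_taylor_term (A c y : R) (m : nat) :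
  is_derive (fun z => A * (z - c) ^ S m / INR (Factorial.fact (S m))) y
    (A * (y - c) ^ m / INR (Factorial.fact m)).
Proof.
  rewrite fact_simpl, mult_INR.
  pose proof (INR_fact_neq_0 m). pose proof (not_0_INR (S m) (Nat.neq_succ_0 m)).
  auto_derive; [easy|].
  change (match m with 0%nat => 1 | S _ => INR m + 1 end) with (INR (S m)).
  rewrite Rminus_def. field. auto.
Qed.

Lemma is_derive_taylor_poly d n c y :
  is_derive (taylor_poly d (S n) c) y (taylor_poly (fun k => d (S k)) n c y).
Proof.
  induction n as [|n IH]; unfold taylor_poly in *.
  - simpl. auto_derive; [easy | field].
  - exact (is_derive_plus _ _ y _ _ IH (is_derive_taylor_term _ c y (S n))).
Qed.

Lemma taylor_remainder (d : nat -> R -> R) (c r K : R) (n : nat) :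
  0 <= K ->
  (forall k y, Rabs (y - c) < r -> is_derive (d k) y (d (S k) y)) ->
  (forall y, Rabs (y - c) < r -> Rabs (d (S n) y) <= K) ->
  forall y, Rabs (y - c) < r -> Rabs (d 0%nat y - taylor_poly d n c y) <= K * Rabs (y - c) ^ S n.
Proof.
  intros HK. revert d. induction n as [|n IH]; intros d Hd Hb.
  - apply (mvt_pow_bound _ (fun y => d 1%nat y - 0) c r K 0); auto.
    + intros y Hy.
      exact (is_derive_minus _ _ y _ _ (Hd 0%nat y Hy) (is_derive_const (d 0%nat c * 1 / 1) y)).
    + rewrite taylor_poly_center. apply Rminus_diag.
    + intros y Hy. rewrite Rminus_0_r, pow_O, Rmult_1_r. auto.
  - apply (mvt_pow_bound _ (fun y => d 1%nat y - taylor_poly (fun k => d (S k)) n c y)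
                          c r K (S n)); auto.
    + intros y Hy.
      exact (is_derive_minus _ _ y _ _ (Hd 0%nat y Hy) (is_derive_taylor_poly d n c y)).
    + rewrite taylor_poly_center. apply Rminus_diag.
    + apply (IH (fun k => d (S k))); auto.
Qed.

(* [D w] stands for [pderiv w u] near the fold point: the words in [jet_bounded] are the
   derivatives bounding the Taylor remainders of [jet_expansion]. *)
Record fold_jet (D : list bool -> R -> R -> R) (t0 xi0 rho M a b : R) : Prop := {
  jet_rho_pos : 0 < rho;
  jet_M_nonneg : 0 <= M;
  jet_dx : forall w t x, Rabs (t - t0) < rho -> is_derive (D w t) x (D (false :: w) t x);
  jet_dt : forall w t x, Rabs (t - t0) < rho -> is_derive (fun s => D w s x) t (D (true :: w) t x);
  jet_bounded : forall w t x,
    In w [[false; false; false; false]; [true; true; true]; [true; true; false];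
          [true; false; false]; [true; false; false; false]] ->
    Rabs (t - t0) < rho -> Rabs (x - xi0) < rho -> Rabs (D w t x) <= M;
  jet_xxx_near : forall t x, Rabs (t - t0) < rho -> Rabs (x - xi0) < rho ->
    Rabs (D [false; false; false] t x - a) <= Rabs a / 2;
  jet_at_0 : D [] t0 xi0 = 0;
  jet_at_x : D [false] t0 xi0 = 0;
  jet_at_xx : D [false; false] t0 xi0 = 0;
  jet_at_xxx : D [false; false; false] t0 xi0 = a;
  jet_at_t : D [true] t0 xi0 = 0;
  jet_at_tt : D [true; true] t0 xi0 = b;
  jet_at_tx : D [true; false] t0 xi0 = a }.

Section Jet.

Variables (D : list bool -> R -> R -> R) (t0 xi0 rho M a b : R).
Hypothesis HD : fold_jet D t0 xi0 rho M a b.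

Lemma jet_taylor_t w n :
  (forall s, Rabs (s - t0) < rho -> Rabs (D (repeat true (S n) ++ w) s xi0) <= M) ->
  forall t, Rabs (t - t0) < rho ->
  Rabs (D w t xi0 - taylor_poly (fun k s => D (repeat true k ++ w) s xi0) n t0 t)
    <= M * Rabs (t - t0) ^ S n.
Proof.
  intros Hb. apply (taylor_remainder (fun k s => D (repeat true k ++ w) s xi0)); auto.
  - exact (jet_M_nonneg _ _ _ _ _ _ _ HD).
  - intros k s Hs. exact (jet_dt _ _ _ _ _ _ _ HD _ s xi0 Hs).
Qed.

Lemma jet_taylor_x w n t :
  Rabs (t - t0) < rho ->
  (forall y, Rabs (y - xi0) < rho -> Rabs (D (repeat false (S n) ++ w) t y) <= M) ->
  forall x, Rabs (x - xi0) < rho ->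
  Rabs (D w t x - taylor_poly (fun k y => D (repeat false k ++ w) t y) n xi0 x)
    <= M * Rabs (x - xi0) ^ S n.
Proof.
  intros Ht Hb. apply (taylor_remainder (fun k y => D (repeat false k ++ w) t y)); auto.
  - exact (jet_M_nonneg _ _ _ _ _ _ _ HD).
  - intros k y _. exact (jet_dx _ _ _ _ _ _ _ HD _ t y Ht).
Qed.

Lemma jet_expansion_t t :
  Rabs (t - t0) < rho ->
  Rabs (D [] t xi0 - b * (t - t0) ^ 2 / 2) <= M * Rabs (t - t0) ^ 3 /\
  Rabs (D [false] t xi0 - a * (t - t0)) <= M * Rabs (t - t0) ^ 2 /\
  Rabs (D [false; false] t xi0) <= M * Rabs (t - t0) /\
  Rabs (D [false; false; false] t xi0 - a) <= M * Rabs (t - t0).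
Proof.
  intros Ht. destruct HD as [Hrho _ _ _ Hb _ H0 H1 H2 H3 Ht1 Htt Htx].
  assert (Hx0 : Rabs (xi0 - xi0) < rho) by (rewrite Rminus_diag, Rabs_R0; exact Hrho).
  assert (Hbt : forall w, In w [[true; true; true]; [true; true; false];
                               [true; false; false]; [true; false; false; false]] ->
                forall s, Rabs (s - t0) < rho -> Rabs (D w s xi0) <= M)
    by (intros w Hw s Hs; apply Hb; simpl in *; tauto).
  pose proof (jet_taylor_t [] 2 (Hbt [true; true; true] ltac:(simpl; tauto)) t Ht) as E0.
  pose proof (jet_taylor_t [false] 1 (Hbt [true; true; false] ltac:(simpl; tauto)) t Ht) as E1.
  pose proof (jet_taylor_t [false; false] 0
                (Hbt [true; false; false] ltac:(simpl; tauto)) t Ht) as E2.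
  pose proof (jet_taylor_t [false; false; false] 0
                (Hbt [true; false; false; false] ltac:(simpl; tauto)) t Ht) as E3.
  assert (T0 : taylor_poly (fun k s => D (repeat true k ++ []) s xi0) 2 t0 t
               = b * (t - t0) ^ 2 / 2)
    by (unfold taylor_poly; simpl; rewrite H0, Ht1, Htt; field).
  assert (T1 : taylor_poly (fun k s => D (repeat true k ++ [false]) s xi0) 1 t0 t
               = a * (t - t0))
    by (unfold taylor_poly; simpl; rewrite H1, Htx; field).
  assert (T2 : taylor_poly (fun k s => D (repeat true k ++ [false; false]) s xi0) 0 t0 t = 0)
    by (unfold taylor_poly; simpl; rewrite H2; field).
  assert (T3 : taylor_poly (fun k s => D (repeat true k ++ [false; false; false]) s xi0) 0 t0 t
               = a)
    by (unfold taylor_poly; simpl; rewrite H3; field).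
  rewrite T0 in E0. rewrite T1 in E1. rewrite T2, Rminus_0_r, pow_1 in E2.
  rewrite T3, pow_1 in E3.
  auto.
Qed.

Lemma jet_expansion t x :
  Rabs (t - t0) < rho -> Rabs (x - xi0) < rho ->
  Rabs (D [] t x - (b * (t - t0) ^ 2 / 2 + a * (t - t0) * (x - xi0) + a * (x - xi0) ^ 3 / 6))
    <= M * (Rabs (t - t0) ^ 3 + Rabs (t - t0) ^ 2 * Rabs (x - xi0)
            + Rabs (t - t0) * Rabs (x - xi0) ^ 2 + Rabs (t - t0) * Rabs (x - xi0) ^ 3
            + Rabs (x - xi0) ^ 4) /\
  Rabs (D [false] t x - (a * (t - t0) + a * (x - xi0) ^ 2 / 2))
    <= M * (Rabs (t - t0) ^ 2 + Rabs (t - t0) * Rabs (x - xi0)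
            + Rabs (t - t0) * Rabs (x - xi0) ^ 2 + Rabs (x - xi0) ^ 3).
Proof.
  intros Ht Hx. destruct (jet_expansion_t t Ht) as (E0 & E1 & E2 & E3).
  pose proof (jet_M_nonneg _ _ _ _ _ _ _ HD) as HM.
  assert (Hb : forall y, Rabs (y - xi0) < rho -> Rabs (D [false; false; false; false] t y) <= M)
    by (intros y Hy; apply (jet_bounded _ _ _ _ _ _ _ HD); simpl; auto).
  pose proof (jet_taylor_x [] 3 t Ht Hb x Hx) as X0.
  pose proof (jet_taylor_x [false] 2 t Ht Hb x Hx) as X1.
  unfold taylor_poly in X0, X1; simpl in X0, X1.
  set (tau := t - t0) in *. set (X := x - xi0) in *.
  set (c0 := D [] t xi0) in *. set (c1 := D [false] t xi0) in *.
  set (c2 := D [false; false] t xi0) in *. set (c3 := D [false; false; false] t xi0) in *.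
  replace (c0 * 1 / 1 + c1 * (X * 1) / 1 + c2 * (X * (X * 1)) / (1 + 1)
           + c3 * (X * (X * (X * 1))) / (1 + 1 + 1 + 1 + 1 + 1))
    with (c0 + c1 * X + c2 * X ^ 2 / 2 + c3 * X ^ 3 / 6) in X0 by field.
  replace (c1 * 1 / 1 + c2 * (X * 1) / 1 + c3 * (X * (X * 1)) / (1 + 1))
    with (c1 + c2 * X + c3 * X ^ 2 / 2) in X1 by field.
  pose proof (Rabs_pos tau). pose proof (Rabs_pos X).
  pose proof (Rabs_pow_div_le X 2 2 ltac:(lra)). pose proof (Rabs_pow_div_le X 3 6 ltac:(lra)).
  pose proof (Rabs_mult_le _ X _ E1). pose proof (Rabs_mult_le _ X _ E2).
  pose proof (Rabs_mult_le _ (X ^ 2 / 2) _ E2). pose proof (Rabs_mult_le _ (X ^ 2 / 2) _ E3).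
  pose proof (Rabs_mult_le _ (X ^ 3 / 6) _ E3).
  assert (0 <= M * Rabs tau) by (apply Rmult_le_pos; lra).
  split.
  - replace (D [] t x - (b * tau ^ 2 / 2 + a * tau * X + a * X ^ 3 / 6)) with
      ((D [] t x - (c0 + c1 * X + c2 * X ^ 2 / 2 + c3 * X ^ 3 / 6))
       + (c0 - b * tau ^ 2 / 2) + (c1 - a * tau) * X + (c2 * (X ^ 2 / 2) + (c3 - a) * (X ^ 3 / 6)))
      by field.
    pose proof (Rabs_triang (c2 * (X ^ 2 / 2)) ((c3 - a) * (X ^ 3 / 6))).
    eapply Rle_trans; [apply Rabs_sum4_le|]. simpl in *.
    nra.
  - replace (D [false] t x - (a * tau + a * X ^ 2 / 2)) with
      ((D [false] t x - (c1 + c2 * X + c3 * X ^ 2 / 2))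
       + (c1 - a * tau) + c2 * X + (c3 - a) * (X ^ 2 / 2))
      by field.
    eapply Rle_trans; [apply Rabs_sum4_le|]. simpl in *.
    nra.
Qed.

End Jet.

Lemma fold_jet_opp D t0 xi0 rho M a b :
  fold_jet D t0 xi0 rho M a b -> fold_jet (fun w t x => - D w t x) t0 xi0 rho M (- a) (- b).
Proof.
  intros [Hrho HM Hdx Hdt Hb Hxxx H0 H1 H2 H3 Ht Htt Htx].
  split; auto; intros.
  - exact (is_derive_opp _ _ _ (Hdx w t x H)).
  - exact (is_derive_opp (fun s => D w s x) _ _ (Hdt w t x H)).
  - rewrite Rabs_Ropp. auto.
  - replace (- D [false; false; false] t x - - a) with (- (D [false; false; false] t x - a))
      by ring.
    rewrite !Rabs_Ropp. auto.
  all: cbv beta; rewrite ?H0, ?H1, ?H2, ?H3, ?Ht, ?Htt, ?Htx; ring.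
Qed.

Definition fold_bifurcation (U Ux : R -> R -> R) (t0 xi0 a b : R) : Prop :=
  exists (delta eps C : R) (xi1 xi2 xi : R -> R),
    0 < delta /\ delta < t0 /\ 0 < eps /\ 0 <= C /\
    (forall t, t0 - delta < t < t0 ->
       xi1 t <> xi2 t /\ xi1 t <> xi t /\ xi2 t <> xi t /\
       forall x, (Rabs (x - xi0) < eps /\ U t x = 0) <->
                 (x = xi1 t \/ x = xi2 t \/ x = xi t)) /\
    (forall t, t0 <= t < t0 + delta ->
       forall x, (Rabs (x - xi0) < eps /\ U t x = 0) <-> x = xi t) /\
    (forall t, t0 - delta < t < t0 ->
       Rabs (xi1 t - xi0 - sqrt (6 * (t0 - t))) <= C * (t0 - t) /\
       Rabs (xi2 t - xi0 + sqrt (6 * (t0 - t))) <= C * (t0 - t) /\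
       Rabs (Ux t (xi1 t) - 2 * a * (t0 - t)) <= C * ((t0 - t) * sqrt (t0 - t)) /\
       Rabs (Ux t (xi2 t) - 2 * a * (t0 - t)) <= C * ((t0 - t) * sqrt (t0 - t))) /\
    (forall t, Rabs (t - t0) < delta ->
       Rabs (xi t - xi0 - b / (2 * a) * (t0 - t)) <= C * (t0 - t) ^ 2 /\
       Rabs (Ux t (xi t) - a * (t - t0)) <= C * (t0 - t) ^ 2).

Section Fold.

Variables (U Ux Uxx Uxxx : R -> R -> R) (t0 xi0 rho M a b : R).

Hypothesis rho_pos : 0 < rho.
Hypothesis rho_le_t0 : rho <= t0.
Hypothesis a_pos : 0 < a.
Hypothesis M_nonneg : 0 <= M.
Hypothesis U_dx : forall t x, Rabs (t - t0) < rho -> is_derive (U t) x (Ux t x).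
Hypothesis Ux_dx : forall t x, Rabs (t - t0) < rho -> is_derive (Ux t) x (Uxx t x).
Hypothesis Uxx_dx : forall t x, Rabs (t - t0) < rho -> is_derive (Uxx t) x (Uxxx t x).
Hypothesis Uxxx_pos :
  forall t x, Rabs (t - t0) < rho -> Rabs (x - xi0) < rho -> 0 < Uxxx t x.
Hypothesis U_expansion : forall t x, Rabs (t - t0) < rho -> Rabs (x - xi0) < rho ->
  Rabs (U t x - (b * (t - t0) ^ 2 / 2 + a * (t - t0) * (x - xi0) + a * (x - xi0) ^ 3 / 6))
    <= M * (Rabs (t - t0) ^ 3 + Rabs (t - t0) ^ 2 * Rabs (x - xi0)
            + Rabs (t - t0) * Rabs (x - xi0) ^ 2 + Rabs (t - t0) * Rabs (x - xi0) ^ 3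
            + Rabs (x - xi0) ^ 4).
Hypothesis Ux_expansion : forall t x, Rabs (t - t0) < rho -> Rabs (x - xi0) < rho ->
  Rabs (Ux t x - (a * (t - t0) + a * (x - xi0) ^ 2 / 2))
    <= M * (Rabs (t - t0) ^ 2 + Rabs (t - t0) * Rabs (x - xi0)
            + Rabs (t - t0) * Rabs (x - xi0) ^ 2 + Rabs (x - xi0) ^ 3).

Lemma U_continuous t : Rabs (t - t0) < rho -> continuity (U t).
Proof. intros Ht x. exact (continuity_pt_of_is_derive _ _ _ (U_dx t x Ht)). Qed.

Lemma U_no_four_zeros t x1 x2 x3 x4 :
  Rabs (t - t0) < rho -> Rabs (x1 - xi0) < rho -> Rabs (x4 - xi0) < rho ->
  x1 < x2 -> x2 < x3 -> x3 < x4 ->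
  U t x1 = 0 -> U t x2 = 0 -> U t x3 = 0 -> U t x4 = 0 -> False.
Proof.
  intros Ht H1 H4 L12 L23 L34.
  apply (no_four_zeros (U t) (Ux t) (Uxx t) (Uxxx t)); auto.
  intros y Hy. apply Rgt_not_eq, Uxxx_pos; auto.
  apply (Rabs_between xi0 rho x1 x4); auto; lra.
Qed.

Lemma Ux_lower_after t x :
  0 <= t - t0 < rho -> Rabs (x - xi0) < rho ->
  8 * M * (t - t0) <= a -> 8 * M ^ 2 * (t - t0) <= a ^ 2 -> 8 * M * Rabs (x - xi0) <= a ->
  5 * a * (t - t0) / 8 + a * (x - xi0) ^ 2 / 8 <= Ux t x.
Proof.
  intros Ht Hx H1 H2 H3.
  assert (HU := Ux_expansion t x ltac:(rewrite Rabs_pos_eq; lra) Hx).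
  rewrite (Rabs_pos_eq (t - t0)) in HU by lra.
  set (tau := t - t0) in *. set (Y := Rabs (x - xi0)) in *.
  assert (HY : 0 <= Y) by apply Rabs_pos.
  rewrite <- (pow2_abs (x - xi0)) in *. fold Y in HU |- *.
  assert (A1 : M * tau ^ 2 <= a * tau / 8) by nra.
  assert (A2 : M * (tau * Y ^ 2) <= a * Y ^ 2 / 8) by nra.
  assert (A3 : M * Y ^ 3 <= a * Y ^ 2 / 8) by nra.
  assert (A4 : M * (tau * Y) <= a * Y ^ 2 / 8 + a * tau / 4).
  { assert (0 <= (a * Y - 4 * M * tau) ^ 2) by apply pow2_ge_0.
    assert (8 * M ^ 2 * tau * tau <= a ^ 2 * tau) by (apply Rmult_le_compat_r; lra).
    apply Rmult_le_reg_l with a; nra. }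
  apply Rabs_le_between in HU. nra.
Qed.

Lemma U_two_zeros_after t x1 x2 e :
  e <= rho -> 8 * M * e <= a ->
  0 <= t - t0 < rho -> 8 * M * (t - t0) <= a -> 8 * M ^ 2 * (t - t0) <= a ^ 2 ->
  x1 < x2 -> Rabs (x1 - xi0) < e -> Rabs (x2 - xi0) < e -> U t x1 = 0 -> U t x2 = 0 ->
  t = t0 /\ x1 < xi0 < x2.
Proof.
  intros He HMe Ht H1 H2 L12 A1 A2 Z1 Z2.
  destruct (rolle_is_derive (U t) (Ux t) x1 x2) as [z [Hz Ez]];
    [lra | intros y _; apply U_dx; rewrite Rabs_pos_eq; lra | congruence |].
  assert (Az : Rabs (z - xi0) < e) by (apply (Rabs_between xi0 e x1 x2); auto; lra).
  assert (8 * M * Rabs (z - xi0) <= 8 * M * e) by (apply Rmult_le_compat_l; lra).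
  pose proof (Ux_lower_after t z Ht ltac:(lra) H1 H2 ltac:(lra)) as Pz.
  assert (0 <= (z - xi0) ^ 2) by apply pow2_ge_0.
  assert (Hz0 : (z - xi0) * (z - xi0) = 0) by nra.
  apply Rmult_integral in Hz0. split; [nra | lra].
Qed.

(* [K] and [L] are the constants in the errors O(t0 - t) of the outer zeros and
   O((t - t0)^2) of the middle zero; [P] bounds the slope of the middle branch. *)
Let P := Rabs b / (2 * a) + 1.
Let K := 2 * (Rabs b + 341 * M + 1) / a.
Let L := (a * P ^ 3 + M * (1 + P + P ^ 2 + P ^ 3 + P ^ 4) + 1) / a.

Lemma P_ge_1 : 1 <= P.
Proof.
  unfold P. assert (0 <= Rabs b / (2 * a))
    by (apply Rdiv_le_0_compat; [apply Rabs_pos | lra]). lra.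
Qed.

Lemma K_pos : 0 < K.
Proof. unfold K. pose proof (Rabs_pos b). apply Rdiv_lt_0_compat; lra. Qed.

Lemma L_pos : 0 < L.
Proof.
  unfold L. pose proof P_ge_1.
  assert (0 <= P ^ 2) by nra. assert (0 <= P ^ 3) by nra. assert (0 <= P ^ 4) by nra.
  apply Rdiv_lt_0_compat; nra.
Qed.

Lemma U_cubic_before_fold t X :
  0 < t0 - t -> sqrt (t0 - t) <= 1 -> 4 * sqrt (t0 - t) < rho -> Rabs X <= 4 * sqrt (t0 - t) ->
  Rabs (U t (xi0 + X) - a * X * (X ^ 2 - 6 * (t0 - t)) / 6) <= (Rabs b + 341 * M) * (t0 - t) ^ 2.
Proof.
  intros Hs Hs1 Hrs HX. destruct (sqrt_sqr_pos _ Hs) as [Hsg Hsg2].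
  set (sg := sqrt (t0 - t)) in *. rewrite <- Hsg2.
  assert (Ht : Rabs (t - t0) = sg ^ 2) by (rewrite Rabs_minus_sym, Rabs_pos_eq; lra).
  pose proof (U_expansion t (xi0 + X) ltac:(nra) ltac:(replace (xi0 + X - xi0) with X by ring; lra))
    as HU.
  replace (xi0 + X - xi0) with X in HU by ring. rewrite Ht in HU.
  replace (t - t0) with (- sg ^ 2) in HU by lra.
  set (Y := Rabs X) in *. assert (0 <= Y) by apply Rabs_pos.
  assert (Herr : (sg ^ 2) ^ 3 + (sg ^ 2) ^ 2 * Y + sg ^ 2 * Y ^ 2 + sg ^ 2 * Y ^ 3 + Y ^ 4
                 <= 341 * sg ^ 4).
  { assert (Y ^ 2 <= 16 * sg ^ 2) by nra. assert (Y ^ 3 <= 64 * sg ^ 3) by nra.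
    assert (Y ^ 4 <= 256 * sg ^ 4) by nra. assert (sg ^ 2 <= 1) by nra.
    assert (sg ^ 3 <= 1) by nra. nra. }
  assert (Hb : Rabs (b * (- sg ^ 2) ^ 2 / 2) <= Rabs b * (sg ^ 2) ^ 2).
  { replace (b * (- sg ^ 2) ^ 2 / 2) with (b * (sg ^ 2) ^ 2 * / 2) by field.
    rewrite !Rabs_mult, Rabs_inv, (Rabs_pos_eq 2), (Rabs_pos_eq ((sg ^ 2) ^ 2)) by nra.
    pose proof (Rabs_pos b). assert (0 <= (sg ^ 2) ^ 2) by nra. nra. }
  replace (U t (xi0 + X) - a * X * (X ^ 2 - 6 * sg ^ 2) / 6) with
    ((U t (xi0 + X) - (b * (- sg ^ 2) ^ 2 / 2 + a * - sg ^ 2 * X + a * X ^ 3 / 6))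
     + b * (- sg ^ 2) ^ 2 / 2) by field.
  eapply Rle_trans; [apply Rabs_triang|].
  assert (M * ((sg ^ 2) ^ 3 + (sg ^ 2) ^ 2 * Y + sg ^ 2 * Y ^ 2 + sg ^ 2 * Y ^ 3 + Y ^ 4)
          <= M * (341 * sg ^ 4)) by (apply Rmult_le_compat_l; lra).
  replace ((sg ^ 2) ^ 2) with (sg ^ 4) in * by ring. nra.
Qed.

Lemma U_outer_zero t e :
  (e = 1 \/ e = -1) -> 0 < t0 - t -> sqrt (t0 - t) <= 1 -> K * sqrt (t0 - t) <= 1 ->
  4 * sqrt (t0 - t) < rho ->
  exists z, U t z = 0 /\ Rabs (z - xi0 - e * sqrt (6 * (t0 - t))) <= K * (t0 - t).
Proof.
  intros He Hs Hs1 HK Hrs. destruct (sqrt_sqr_pos _ Hs) as [Hsg Hsg2].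
  destruct (sqrt_6_bounds (t0 - t) ltac:(lra)) as [Hr2 Hr].
  set (sg := sqrt (t0 - t)) in *. set (r := sqrt (6 * (t0 - t))) in *.
  pose proof K_pos. set (k := K * (t0 - t)).
  assert (Hk : 0 <= k <= sg) by (unfold k; rewrite <- Hsg2; split; nra).
  assert (HX : forall k', Rabs k' <= k -> Rabs (e * r + k') <= 4 * sg).
  { intros k' Hk'. apply Rabs_le_between in Hk'. apply Rabs_le_between.
    destruct He as [-> | ->]; lra. }
  pose proof (U_cubic_before_fold t (e * r + k) Hs Hs1 Hrs
                (HX k ltac:(rewrite Rabs_pos_eq; lra))) as Vp.
  pose proof (U_cubic_before_fold t (e * r + - k) Hs Hs1 Hrs
                (HX (- k) ltac:(rewrite Rabs_Ropp, Rabs_pos_eq; lra))) as Vm.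
  apply Rabs_le_between in Vp, Vm.
  destruct (cubic_sign_near_root a e r (t0 - t) k a_pos He ltac:(lra) Hr2 (proj1 Hr) Hk) as [Wp Wm].
  assert (HaK : a * k * (t0 - t) / 2 = (Rabs b + 341 * M + 1) * (t0 - t) ^ 2)
    by (unfold k, K; field; lra).
  assert (0 < (t0 - t) ^ 2) by (apply pow_lt; lra).
  replace (e * r + - k) with (e * r - k) in Vm by ring.
  destruct (IVT_cor (U t) (xi0 + (e * r - k)) (xi0 + (e * r + k))) as [z [Hz Ez]];
    [apply U_continuous; rewrite Rabs_minus_sym, Rabs_pos_eq; nra | lra | nra |].
  exists z. split; [exact Ez|]. apply Rabs_le_between. fold k. lra.
Qed.

Lemma Ux_quadratic_before_fold t X :
  0 < t0 - t -> sqrt (t0 - t) <= 1 -> 4 * sqrt (t0 - t) < rho -> Rabs X <= 4 * sqrt (t0 - t) ->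
  Rabs (Ux t (xi0 + X) - a * (X ^ 2 - 2 * (t0 - t)) / 2) <= 85 * M * ((t0 - t) * sqrt (t0 - t)).
Proof.
  intros Hs Hs1 Hrs HX. destruct (sqrt_sqr_pos _ Hs) as [Hsg Hsg2].
  set (sg := sqrt (t0 - t)) in *. rewrite <- Hsg2.
  assert (Ht : Rabs (t - t0) = sg ^ 2) by (rewrite Rabs_minus_sym, Rabs_pos_eq; lra).
  pose proof (Ux_expansion t (xi0 + X) ltac:(nra)
                ltac:(replace (xi0 + X - xi0) with X by ring; lra))
    as HU.
  replace (xi0 + X - xi0) with X in HU by ring. rewrite Ht in HU.
  replace (a * (t - t0) + a * X ^ 2 / 2) with (a * (X ^ 2 - 2 * sg ^ 2) / 2) in HU
    by (replace (t - t0) with (- sg ^ 2) by lra; field).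
  set (Y := Rabs X) in *. assert (0 <= Y) by apply Rabs_pos.
  assert (Herr : (sg ^ 2) ^ 2 + sg ^ 2 * Y + sg ^ 2 * Y ^ 2 + Y ^ 3 <= 85 * (sg ^ 2 * sg)).
  { assert (Y ^ 2 <= 16 * sg ^ 2) by nra. assert (Y ^ 3 <= 64 * sg ^ 3) by nra.
    assert (sg ^ 4 <= sg ^ 3) by nra. simpl in *. nra. }
  assert (M * ((sg ^ 2) ^ 2 + sg ^ 2 * Y + sg ^ 2 * Y ^ 2 + Y ^ 3) <= M * (85 * (sg ^ 2 * sg)))
    by (apply Rmult_le_compat_l; lra).
  lra.
Qed.

Lemma Ux_outer_zero t e z :
  (e = 1 \/ e = -1) -> 0 < t0 - t -> sqrt (t0 - t) <= 1 -> K * sqrt (t0 - t) <= 1 ->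
  4 * sqrt (t0 - t) < rho ->
  Rabs (z - xi0 - e * sqrt (6 * (t0 - t))) <= K * (t0 - t) ->
  Rabs (Ux t z - 2 * a * (t0 - t)) <= (85 * M + 4 * a * K) * ((t0 - t) * sqrt (t0 - t)).
Proof.
  intros He Hs Hs1 HK Hrs Hz. destruct (sqrt_sqr_pos _ Hs) as [Hsg Hsg2].
  destruct (sqrt_6_bounds (t0 - t) ltac:(lra)) as [Hr2 Hr].
  set (sg := sqrt (t0 - t)) in *. set (r := sqrt (6 * (t0 - t))) in *.
  pose proof K_pos. set (k := z - xi0 - e * r) in *.
  assert (Hk : Rabs k <= sg) by (rewrite <- Hsg2 in Hz; nra).
  assert (Hek : Rabs (2 * e * r + k) <= 7 * sg).
  { apply Rabs_le_between in Hk. apply Rabs_le_between. destruct He as [-> | ->]; lra. }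
  assert (HX : Rabs (z - xi0) <= 4 * sg).
  { replace (z - xi0) with (e * r + k) by (unfold k; ring).
    apply Rabs_le_between in Hk. apply Rabs_le_between. destruct He as [-> | ->]; lra. }
  pose proof (Ux_quadratic_before_fold t (z - xi0) Hs Hs1 Hrs HX) as HU.
  replace (xi0 + (z - xi0)) with z in HU by ring. fold sg in HU.
  replace (a * ((z - xi0) ^ 2 - 2 * (t0 - t)) / 2)
    with (2 * a * (t0 - t) + a / 2 * (k * (2 * e * r + k))) in HU
    by (replace (z - xi0) with (e * r + k) by (unfold k; ring);
        replace (t0 - t) with (r ^ 2 / 6) by lra; destruct He as [-> | ->]; field).
  assert (Hm : Rabs (a / 2 * (k * (2 * e * r + k))) <= 4 * a * K * ((t0 - t) * sg)).
  { rewrite Rabs_mult, Rabs_mult, (Rabs_pos_eq (a / 2)) by lra.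
    assert (Rabs k * Rabs (2 * e * r + k) <= K * (t0 - t) * (7 * sg))
      by (apply Rmult_le_compat; auto using Rabs_pos).
    assert (0 <= a * K * ((t0 - t) * sg)) by (apply Rmult_le_pos; [nra | apply Rmult_le_pos; lra]).
    nra. }
  pose proof (Rabs_triang (Ux t z - (2 * a * (t0 - t) + a / 2 * (k * (2 * e * r + k))))
                          (a / 2 * (k * (2 * e * r + k)))).
  replace (Ux t z - (2 * a * (t0 - t) + a / 2 * (k * (2 * e * r + k)))
           + a / 2 * (k * (2 * e * r + k)))
    with (Ux t z - 2 * a * (t0 - t)) in * by ring.
  lra.
Qed.

Lemma middle_zero_location t z :
  L * Rabs (t - t0) <= 1 -> Rabs (z - xi0 - b / (2 * a) * (t0 - t)) <= L * (t - t0) ^ 2 ->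
  Rabs (z - xi0) <= P * Rabs (t - t0).
Proof.
  intros HL Hz. rewrite <- (pow2_abs (t - t0)) in Hz. set (q := Rabs (t - t0)) in *.
  assert (0 <= q) by apply Rabs_pos.
  assert (Hc : Rabs (b / (2 * a) * (t0 - t)) = Rabs b / (2 * a) * q).
  { unfold q. rewrite Rabs_mult, Rabs_div, (Rabs_pos_eq (2 * a)), (Rabs_minus_sym t0 t); lra. }
  replace (z - xi0) with (b / (2 * a) * (t0 - t) + (z - xi0 - b / (2 * a) * (t0 - t))) by ring.
  eapply Rle_trans; [apply Rabs_triang|]. rewrite Hc. unfold P. nra.
Qed.

Lemma U_near_middle_branch t X :
  Rabs (t - t0) <= 1 -> Rabs (t - t0) < rho -> P * Rabs (t - t0) < rho ->
  Rabs X <= P * Rabs (t - t0) ->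
  Rabs (U t (xi0 + X) - (b * (t - t0) ^ 2 / 2 + a * (t - t0) * X))
    <= (a * P ^ 3 + M * (1 + P + P ^ 2 + P ^ 3 + P ^ 4)) * Rabs (t - t0) ^ 3.
Proof.
  intros Hq1 Hqr HPq HX. pose proof P_ge_1.
  pose proof (U_expansion t (xi0 + X) Hqr ltac:(replace (xi0 + X - xi0) with X by ring; lra)) as HU.
  replace (xi0 + X - xi0) with X in HU by ring.
  set (q := Rabs (t - t0)) in *. set (Y := Rabs X) in *.
  assert (0 <= q) by apply Rabs_pos. assert (0 <= Y) by apply Rabs_pos.
  assert (Herr : q ^ 3 + q ^ 2 * Y + q * Y ^ 2 + q * Y ^ 3 + Y ^ 4
                 <= (1 + P + P ^ 2 + P ^ 3 + P ^ 4) * q ^ 3).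
  { assert (Y ^ 2 <= P ^ 2 * q ^ 2) by nra. assert (Y ^ 3 <= P ^ 3 * q ^ 3) by nra.
    assert (Y ^ 4 <= P ^ 4 * q ^ 4) by nra.
    assert (0 <= q ^ 3) by (apply pow_le; lra).
    assert (q ^ 4 <= q ^ 3) by (replace (q ^ 4) with (q ^ 3 * q) by ring; nra).
    assert (q ^ 2 * Y <= P * q ^ 3).
    { replace (P * q ^ 3) with (q ^ 2 * (P * q)) by ring. apply Rmult_le_compat_l; nra. }
    assert (q * Y ^ 2 <= P ^ 2 * q ^ 3) by nra.
    assert (0 <= Y ^ 3) by (apply pow_le; lra).
    assert (q * Y ^ 3 <= Y ^ 3) by nra.
    assert (P ^ 4 * q ^ 4 <= P ^ 4 * q ^ 3) by (apply Rmult_le_compat_l; [apply pow_le|]; lra).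
    lra. }
  assert (Hcube : Rabs (a * X ^ 3 / 6) <= a * P ^ 3 * q ^ 3).
  { unfold Rdiv. rewrite !Rabs_mult, Rabs_inv, (Rabs_pos_eq 6), (Rabs_pos_eq a), <- RPow_abs by lra.
    fold Y. assert (Y ^ 3 <= (P * q) ^ 3) by (apply pow_incr; lra).
    assert (0 <= Y ^ 3) by (apply pow_le; lra). rewrite Rpow_mult_distr in *. nra. }
  replace (U t (xi0 + X) - (b * (t - t0) ^ 2 / 2 + a * (t - t0) * X)) with
    ((U t (xi0 + X) - (b * (t - t0) ^ 2 / 2 + a * (t - t0) * X + a * X ^ 3 / 6)) + a * X ^ 3 / 6)
    by ring.
  eapply Rle_trans; [apply Rabs_triang|].
  assert (M * (q ^ 3 + q ^ 2 * Y + q * Y ^ 2 + q * Y ^ 3 + Y ^ 4)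
          <= M * ((1 + P + P ^ 2 + P ^ 3 + P ^ 4) * q ^ 3)) by (apply Rmult_le_compat_l; lra).
  nra.
Qed.

Lemma U_middle_zero t :
  Rabs (t - t0) <= 1 -> Rabs (t - t0) < rho -> L * Rabs (t - t0) <= 1 ->
  P * Rabs (t - t0) < rho ->
  exists z, U t z = 0 /\ Rabs (z - xi0 - b / (2 * a) * (t0 - t)) <= L * (t - t0) ^ 2.
Proof.
  intros Hq1 Hqr HL HPq.
  set (E2 := a * P ^ 3 + M * (1 + P + P ^ 2 + P ^ 3 + P ^ 4)).
  set (Xs := b / (2 * a) * (t0 - t)). set (h := L * (t - t0) ^ 2).
  assert (HE2 : 0 <= E2).
  { pose proof P_ge_1. unfold E2.
    assert (0 <= P ^ 2) by nra. assert (0 <= P ^ 3) by nra. assert (0 <= P ^ 4) by nra. nra. }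
  assert (Hh : 0 <= h).
  { unfold h, L. fold E2. apply Rmult_le_pos; [apply Rdiv_le_0_compat; lra | apply pow2_ge_0]. }
  assert (HA : Rabs (a * (t - t0) * h) = (E2 + 1) * Rabs (t - t0) ^ 3).
  { rewrite Rabs_mult, Rabs_mult, (Rabs_pos_eq a), (Rabs_pos_eq h) by lra.
    unfold h, L. fold E2. rewrite <- (pow2_abs (t - t0)). field. lra. }
  assert (Hval : forall sg, (sg = 1 \/ sg = -1) ->
    Rabs (U t (xi0 + (Xs + sg * h)) - sg * (a * (t - t0) * h)) <= E2 * Rabs (t - t0) ^ 3).
  { intros sg Hsg.
    assert (Hn : Rabs (xi0 + (Xs + sg * h) - xi0) <= P * Rabs (t - t0)).
    { apply middle_zero_location; auto. fold Xs h.
      replace (xi0 + (Xs + sg * h) - xi0 - Xs) with (sg * h) by ring.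
      apply Rabs_le_between. destruct Hsg as [-> | ->]; lra. }
    replace (xi0 + (Xs + sg * h) - xi0) with (Xs + sg * h) in Hn by ring.
    pose proof (U_near_middle_branch t (Xs + sg * h) Hq1 Hqr HPq Hn) as HU.
    replace (b * (t - t0) ^ 2 / 2 + a * (t - t0) * (Xs + sg * h)) with (sg * (a * (t - t0) * h))
      in HU by (unfold Xs; field; lra).
    exact HU. }
  pose proof (Hval 1 (or_introl eq_refl)) as Vp. pose proof (Hval (-1) (or_intror eq_refl)) as Vm.
  set (A := a * (t - t0) * h) in *.
  assert (0 <= Rabs (t - t0) ^ 3) by (apply pow_le, Rabs_pos).
  assert (Hsign : U t (xi0 + (Xs + -1 * h)) * U t (xi0 + (Xs + 1 * h)) <= 0).
  { apply Rabs_le_between in Vp, Vm. pose proof (Rabs_pos A).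
    destruct (Rle_dec 0 A); [rewrite Rabs_pos_eq in HA | rewrite Rabs_left in HA]; nra. }
  destruct (IVT_cor (U t) (xi0 + (Xs + -1 * h)) (xi0 + (Xs + 1 * h)) (U_continuous t Hqr))
    as [z [Hz Ez]]; [lra | exact Hsign |].
  exists z. split; [exact Ez|]. apply Rabs_le_between. fold Xs h. lra.
Qed.

Lemma Ux_middle_zero t z :
  Rabs (t - t0) <= 1 -> Rabs (t - t0) < rho -> P * Rabs (t - t0) < rho ->
  Rabs (z - xi0) <= P * Rabs (t - t0) ->
  Rabs (Ux t z - a * (t - t0)) <= (a * P ^ 2 / 2 + M * (1 + P + P ^ 2 + P ^ 3)) * (t0 - t) ^ 2.
Proof.
  intros Hq1 Hqr HPq Hz. pose proof P_ge_1.
  pose proof (Ux_expansion t z Hqr ltac:(lra)) as HU.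
  rewrite <- (pow2_abs (z - xi0)) in HU. rewrite <- (pow2_abs (t0 - t)), (Rabs_minus_sym t0 t).
  set (q := Rabs (t - t0)) in *. set (Y := Rabs (z - xi0)) in *.
  assert (0 <= q) by apply Rabs_pos. assert (0 <= Y) by apply Rabs_pos.
  assert (Y ^ 2 <= P ^ 2 * q ^ 2) by nra. assert (q * Y <= P * q ^ 2) by nra.
  assert (q * Y ^ 2 <= P ^ 2 * q ^ 2) by nra. assert (Y ^ 3 <= P ^ 3 * q ^ 2) by nra.
  assert (M * (q ^ 2 + q * Y + q * Y ^ 2 + Y ^ 3) <= M * ((1 + P + P ^ 2 + P ^ 3) * q ^ 2))
    by (apply Rmult_le_compat_l; lra).
  apply Rabs_le_between in HU. apply Rabs_le_between. nra.
Qed.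

Let eps := Rmin rho (a / (8 * (M + 1))).

Let small (q : R) : Prop :=
  sqrt q <= 1 /\ K * sqrt q <= 1 /\ P * sqrt q < 1 /\ L * sqrt q <= 1 /\ 8 * sqrt q < eps.

Lemma eps_pos : 0 < eps.
Proof. apply Rmin_pos; [lra | apply Rdiv_lt_0_compat; lra]. Qed.

Lemma eps_le_rho : eps <= rho.
Proof. apply Rmin_l. Qed.

Lemma eps_le_a : eps * (8 * (M + 1)) <= a.
Proof.
  assert (H : eps <= a / (8 * (M + 1))) by apply Rmin_r.
  apply (Rmult_le_compat_r (8 * (M + 1))) in H; [|lra].
  unfold Rdiv in H. rewrite Rmult_assoc, Rinv_l in H; lra.
Qed.

Lemma small_consequences q :
  0 <= q -> small q ->
  q <= 1 /\ q < rho /\ L * q <= 1 /\ P * q < eps /\ 4 * sqrt q < rho /\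
  8 * M * q <= a /\ 8 * M ^ 2 * q <= a ^ 2.
Proof.
  intros Hq (Hs1 & HK & HP & HL & He).
  pose proof P_ge_1. pose proof L_pos. pose proof eps_pos. pose proof eps_le_rho.
  pose proof eps_le_a. pose proof (sqrt_pos q). pose proof (sqrt_sqrt q Hq).
  assert (Hqs : q <= sqrt q) by nra.
  split; [lra|]. split; [lra|]. split; [nra|]. split; [nra|]. split; [lra|].
  assert (Hqe : q <= eps ^ 2 / 64) by nra.
  assert ((eps * (8 * (M + 1))) * (eps * (8 * (M + 1))) <= a * a)
    by (apply Rmult_le_compat; nra).
  split; nra.
Qed.

Lemma small_near_zero : exists delta, 0 < delta < rho /\ forall q, 0 <= q < delta -> small q.
Proof.
  pose proof eps_pos. pose proof K_pos. pose proof L_pos. pose proof P_ge_1.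
  set (c := 1 + K + P + L + 8 / eps).
  assert (H8 : 8 / eps * eps = 8) by (field; lra).
  assert (0 < 8 / eps) by (apply Rdiv_lt_0_compat; lra).
  assert (Hc : 0 < c) by (unfold c; lra).
  exists (Rmin ((/ (c + 1)) ^ 2) (rho / 2)). split.
  - split; [apply Rmin_pos; [apply pow_lt, Rinv_0_lt_compat |]; lra|].
    apply Rle_lt_trans with (rho / 2); [apply Rmin_r | lra].
  - intros q [Hq0 Hq]. pose proof (sqrt_pos q).
    assert (Hs : sqrt q < / (c + 1)).
    { rewrite <- (sqrt_pow2 (/ (c + 1))) by (apply Rlt_le, Rinv_0_lt_compat; lra).
      apply sqrt_lt_1_alt. split; [lra|]. apply Rlt_le_trans with (1 := Hq), Rmin_l. }
    assert (Hcs : c * sqrt q < 1).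
    { apply (Rmult_lt_compat_l (c + 1)) in Hs; [|lra]. rewrite Rinv_r in Hs; nra. }
    unfold c in Hcs. unfold small. repeat split; nra.
Qed.

Lemma U_three_zeros_before t x1 x2 x3 :
  0 < t0 - t -> small (t0 - t) ->
  U t x1 = 0 -> Rabs (x1 - xi0 - sqrt (6 * (t0 - t))) <= K * (t0 - t) ->
  U t x2 = 0 -> Rabs (x2 - xi0 + sqrt (6 * (t0 - t))) <= K * (t0 - t) ->
  U t x3 = 0 -> Rabs (x3 - xi0 - b / (2 * a) * (t0 - t)) <= L * (t - t0) ^ 2 ->
  x1 <> x2 /\ x1 <> x3 /\ x2 <> x3 /\
  forall x, (Rabs (x - xi0) < eps /\ U t x = 0) <-> (x = x1 \/ x = x2 \/ x = x3).
Proof.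
  intros Hs Hsm Z1 B1 Z2 B2 Z3 B3.
  destruct (small_consequences _ (Rlt_le _ _ Hs) Hsm) as (_ & Hqr & HLq & HPe & H4 & _).
  destruct Hsm as (_ & HK & HP & _ & H8).
  destruct (sqrt_sqr_pos _ Hs) as [Hsg Hsg2].
  destruct (sqrt_6_bounds (t0 - t) ltac:(lra)) as [_ Hr].
  set (sg := sqrt (t0 - t)) in *. set (r := sqrt (6 * (t0 - t))) in *.
  assert (Htau : Rabs (t - t0) = t0 - t) by (rewrite Rabs_minus_sym; apply Rabs_pos_eq; lra).
  pose proof (middle_zero_location t x3 ltac:(rewrite Htau; lra) B3) as N3. rewrite Htau in *.
  assert (Hks : K * (t0 - t) <= sg) by (rewrite <- Hsg2; nra).
  assert (Hps : P * (t0 - t) < sg) by (rewrite <- Hsg2; nra).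
  pose proof eps_le_rho.
  apply Rabs_le_between in B1, B2, N3.
  assert (A1 : Rabs (x1 - xi0) < eps) by (apply Rabs_lt_between; lra).
  assert (A2 : Rabs (x2 - xi0) < eps) by (apply Rabs_lt_between; lra).
  assert (A3 : Rabs (x3 - xi0) < eps) by (apply Rabs_lt_between; lra).
  assert (No4 : forall y1 y2 y3 y4, Rabs (y1 - xi0) < eps -> Rabs (y4 - xi0) < eps ->
                y1 < y2 -> y2 < y3 -> y3 < y4 ->
                U t y1 = 0 -> U t y2 = 0 -> U t y3 = 0 -> U t y4 = 0 -> False)
    by (intros; apply (U_no_four_zeros t y1 y2 y3 y4); auto; lra).
  assert (O23 : x2 < x3) by lra. assert (O31 : x3 < x1) by lra.
  split; [lra|]. split; [lra|]. split; [lra|].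
  intro x. split; [intros [Hx Zx] | intros [-> | [-> | ->]]; auto].
  destruct (Rtotal_order x x2) as [C | [C | C]].
  { exfalso. apply (No4 x x2 x3 x1); auto. }
  { right; left; exact C. }
  destruct (Rtotal_order x x3) as [D | [D | D]].
  { exfalso. apply (No4 x2 x x3 x1); auto. }
  { right; right; exact D. }
  destruct (Rtotal_order x x1) as [E | [E | E]].
  { exfalso. apply (No4 x2 x3 x x1); auto. }
  { left; exact E. }
  exfalso. apply (No4 x2 x3 x1 x); auto.
Qed.

Lemma U_one_zero_after t x3 :
  0 <= t - t0 -> small (t - t0) ->
  U t x3 = 0 -> Rabs (x3 - xi0 - b / (2 * a) * (t0 - t)) <= L * (t - t0) ^ 2 ->
  forall x, (Rabs (x - xi0) < eps /\ U t x = 0) <-> x = x3.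
Proof.
  intros Hs Hsm Z3 B3 x.
  destruct (small_consequences _ Hs Hsm) as (_ & Hqr & HLq & HPe & _ & HM1 & HM2).
  assert (Htau : Rabs (t - t0) = t - t0) by (apply Rabs_pos_eq; lra).
  pose proof (middle_zero_location t x3 ltac:(rewrite Htau; lra) B3) as N3. rewrite Htau in N3.
  assert (A3 : Rabs (x3 - xi0) < eps) by lra.
  assert (Hcenter : t = t0 -> x3 = xi0).
  { intros ->. replace (x3 - xi0 - b / (2 * a) * (t0 - t0)) with (x3 - xi0) in B3 by ring.
    rewrite Rminus_diag, pow_i, Rmult_0_r in B3 by lia. apply Rabs_le_between in B3. lra. }
  pose proof eps_le_rho as Her. pose proof eps_le_a.
  assert (HMe : 8 * M * eps <= a) by nra.
  split; [intros [Hx Zx] | intros ->; auto].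
  destruct (Rtotal_order x x3) as [C | [C | C]]; auto; exfalso.
  - destruct (U_two_zeros_after t x x3 eps Her HMe (conj Hs Hqr) HM1 HM2 C Hx A3 Zx Z3)
      as [Ht0 Hc].
    rewrite (Hcenter Ht0) in Hc. lra.
  - destruct (U_two_zeros_after t x3 x eps Her HMe (conj Hs Hqr) HM1 HM2 C A3 Hx Z3 Zx)
      as [Ht0 Hc].
    rewrite (Hcenter Ht0) in Hc. lra.
Qed.

Lemma fold_branches delta :
  (forall q, 0 <= q < delta -> small q) ->
  exists xi1 xi2 xi : R -> R,
    (forall t, t0 - delta < t < t0 ->
       U t (xi1 t) = 0 /\ Rabs (xi1 t - xi0 - sqrt (6 * (t0 - t))) <= K * (t0 - t) /\
       U t (xi2 t) = 0 /\ Rabs (xi2 t - xi0 + sqrt (6 * (t0 - t))) <= K * (t0 - t)) /\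
    (forall t, Rabs (t - t0) < delta ->
       U t (xi t) = 0 /\ Rabs (xi t - xi0 - b / (2 * a) * (t0 - t)) <= L * (t - t0) ^ 2).
Proof.
  intros Hsmall.
  assert (Houter : forall e, (e = 1 \/ e = -1) -> forall t, t0 - delta < t < t0 ->
            exists z, U t z = 0 /\ Rabs (z - xi0 - e * sqrt (6 * (t0 - t))) <= K * (t0 - t)).
  { intros e He t Ht. assert (Hs : 0 < t0 - t) by lra.
    pose proof (Hsmall (t0 - t) ltac:(lra)) as Hsm.
    destruct (small_consequences _ (Rlt_le _ _ Hs) Hsm) as (_ & _ & _ & _ & H4 & _).
    destruct Hsm as (Hs1 & HK & _). apply U_outer_zero; auto. }
  assert (Hmiddle : forall t, Rabs (t - t0) < delta ->
            exists z, U t z = 0 /\ Rabs (z - xi0 - b / (2 * a) * (t0 - t)) <= L * (t - t0) ^ 2).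
  { intros t Ht. pose proof (Rabs_pos (t - t0)).
    destruct (small_consequences _ (Rabs_pos _) (Hsmall (Rabs (t - t0)) ltac:(lra)))
      as (H1 & Hr & HL & HP & _).
    pose proof eps_le_rho. apply U_middle_zero; auto; lra. }
  destruct (choice_on _ _ (Houter 1 (or_introl eq_refl))) as [xi1 Hxi1].
  destruct (choice_on _ _ (Houter (-1) (or_intror eq_refl))) as [xi2 Hxi2].
  destruct (choice_on _ _ Hmiddle) as [xi Hxi].
  exists xi1, xi2, xi. split; [intros t Ht | exact Hxi].
  destruct (Hxi1 t Ht) as [Z1 B1]. destruct (Hxi2 t Ht) as [Z2 B2].
  rewrite Rmult_1_l in B1.
  replace (xi2 t - xi0 - -1 * sqrt (6 * (t0 - t))) with (xi2 t - xi0 + sqrt (6 * (t0 - t)))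
    in B2 by ring.
  auto.
Qed.

Lemma fold_bifurcation_of_expansion : fold_bifurcation U Ux t0 xi0 a b.
Proof.
  destruct small_near_zero as [delta [[Hd0 Hdr] Hsmall]].
  destruct (fold_branches delta Hsmall) as (xi1 & xi2 & xi & Hout & Hmid).
  assert (Hnear : forall t, Rabs (t - t0) < delta -> small (Rabs (t - t0)))
    by (intros t Ht; apply Hsmall; split; [apply Rabs_pos | lra]).
  pose proof K_pos. pose proof L_pos. pose proof P_ge_1. pose proof eps_pos. pose proof eps_le_rho.
  set (CUx := a * P ^ 2 / 2 + M * (1 + P + P ^ 2 + P ^ 3)).
  assert (0 <= CUx) by (unfold CUx; assert (0 <= P ^ 2) by nra; assert (0 <= P ^ 3) by nra; nra).
  set (C := K + L + (85 * M + 4 * a * K) + CUx).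
  assert (HC : 0 <= 85 * M + 4 * a * K) by nra.
  exists delta, eps, C, xi1, xi2, xi.
  split; [lra|]. split; [lra|]. split; [lra|]. split; [unfold C; lra|].
  split; [|split; [|split]].
  - intros t Ht. destruct (Hout t Ht) as (Z1 & B1 & Z2 & B2).
    destruct (Hmid t ltac:(rewrite Rabs_minus_sym, Rabs_pos_eq; lra)) as [Z3 B3].
    apply U_three_zeros_before; auto; [lra | apply Hsmall; lra].
  - intros t Ht. destruct (Hmid t ltac:(rewrite Rabs_pos_eq; lra)) as [Z3 B3].
    apply U_one_zero_after; [lra | | auto | auto].
    rewrite <- (Rabs_pos_eq (t - t0)) by lra. apply Hnear. rewrite Rabs_pos_eq; lra.
  - intros t Ht. assert (Hs : 0 < t0 - t) by lra. pose proof (Hsmall (t0 - t) ltac:(lra)) as Hsm.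
    destruct (small_consequences _ (Rlt_le _ _ Hs) Hsm) as (_ & _ & _ & _ & Hr4 & _).
    destruct Hsm as (Hs1 & HK & _). destruct (Hout t Ht) as (_ & B1 & _ & B2).
    pose proof (Ux_outer_zero t 1 (xi1 t) (or_introl eq_refl) Hs Hs1 HK Hr4
                  ltac:(rewrite Rmult_1_l; exact B1)).
    pose proof (Ux_outer_zero t (-1) (xi2 t) (or_intror eq_refl) Hs Hs1 HK Hr4
                  ltac:(replace (xi2 t - xi0 - -1 * sqrt (6 * (t0 - t))) with
                          (xi2 t - xi0 + sqrt (6 * (t0 - t))) by ring; exact B2)).
    assert (0 <= (t0 - t) * sqrt (t0 - t)) by (apply Rmult_le_pos; [lra | apply sqrt_pos]).
    repeat split; (eapply Rle_trans; [eassumption | apply Rmult_le_compat_r; unfold C; lra]).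
  - intros t Ht. destruct (Hmid t Ht) as [_ B3].
    destruct (small_consequences _ (Rabs_pos _) (Hnear t Ht)) as (Hq1 & Hqr & HL & HP & _).
    pose proof (Ux_middle_zero t (xi t) Hq1 Hqr ltac:(lra) (middle_zero_location t (xi t) HL B3))
      as HUx.
    fold CUx in HUx. replace ((t - t0) ^ 2) with ((t0 - t) ^ 2) in B3 by ring.
    assert (0 <= (t0 - t) ^ 2) by apply pow2_ge_0.
    split; (eapply Rle_trans; [eassumption | apply Rmult_le_compat_r; unfold C; lra]).
Qed.

End Fold.

Lemma fold_bifurcation_opp U Ux t0 xi0 a b :
  fold_bifurcation (fun t x => - U t x) (fun t x => - Ux t x) t0 xi0 (- a) (- b) ->
  fold_bifurcation U Ux t0 xi0 a b.
Proof.
  intros (delta & eps & C & xi1 & xi2 & xi & Hd & Hdt & He & HC & HA & HB & HC' & HD).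
  assert (Hz : forall t x, - U t x = 0 <-> U t x = 0) by (intros; lra).
  assert (HUx : forall t x c, Rabs (- Ux t x - - c) = Rabs (Ux t x - c))
    by (intros; rewrite <- Rabs_Ropp; f_equal; ring).
  exists delta, eps, C, xi1, xi2, xi.
  do 4 (split; [assumption|]). split; [|split; [|split]].
  - intros t Ht. destruct (HA t Ht) as (H1 & H2 & H3 & Hiff).
    do 3 (split; [assumption|]). intro x. rewrite <- Hiff, Hz. reflexivity.
  - intros t Ht x. rewrite <- (HB t Ht x), Hz. reflexivity.
  - intros t Ht. destruct (HC' t Ht) as (H1 & H2 & H3 & H4).
    rewrite <- !(HUx t). replace (- (2 * a * (t0 - t))) with (2 * - a * (t0 - t)) by ring. auto.
  - intros t Ht. destruct (HD t Ht) as (H1 & H2).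
    rewrite <- HUx, Ropp_mult_distr_l.
    replace (b / (2 * a)) with (- b / (2 * - a))
      by (unfold Rdiv; rewrite <- Ropp_mult_distr_r, Rinv_opp; ring).
    auto.
Qed.

Lemma fold_bifurcation_of_jet D t0 xi0 rho M a b :
  fold_jet D t0 xi0 rho M a b -> rho <= t0 -> a <> 0 ->
  fold_bifurcation (D []) (D [false]) t0 xi0 a b.
Proof.
  assert (Hpos : forall D a b, fold_jet D t0 xi0 rho M a b -> 0 < a -> rho <= t0 ->
                 fold_bifurcation (D []) (D [false]) t0 xi0 a b).
  { intros D' a' b' HD Ha Hrho.
    apply (fold_bifurcation_of_expansion (D' []) (D' [false]) (D' [false; false])
             (D' [false; false; false]) t0 xi0 rho M a' b'); auto.
    - exact (jet_rho_pos _ _ _ _ _ _ _ HD).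
    - exact (jet_M_nonneg _ _ _ _ _ _ _ HD).
    - intros t x Ht. exact (jet_dx _ _ _ _ _ _ _ HD [] t x Ht).
    - intros t x Ht. exact (jet_dx _ _ _ _ _ _ _ HD [false] t x Ht).
    - intros t x Ht. exact (jet_dx _ _ _ _ _ _ _ HD [false; false] t x Ht).
    - intros t x Ht Hx. pose proof (jet_xxx_near _ _ _ _ _ _ _ HD t x Ht Hx) as H.
      rewrite (Rabs_pos_eq a') in H by lra. apply Rabs_le_between in H. lra.
    - intros t x Ht Hx. exact (proj1 (jet_expansion _ _ _ _ _ _ _ HD t x Ht Hx)).
    - intros t x Ht Hx. exact (proj2 (jet_expansion _ _ _ _ _ _ _ HD t x Ht Hx)). }
  intros HD Hrho Ha. destruct (Rlt_or_le 0 a) as [Hp | Hn].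
  - exact (Hpos D a b HD Hp Hrho).
  - assert (0 < - a) by (destruct Hn; [lra | contradiction]).
    apply fold_bifurcation_opp.
    exact (Hpos _ _ _ (fold_jet_opp _ _ _ _ _ _ _ HD) H Hrho).
Qed.

Lemma smooth_is_derive u w t x :
  smooth_halfplane u -> 0 < t ->
  is_derive (pderiv w u t) x (pderiv (false :: w) u t x) /\
  is_derive (fun s => pderiv w u s x) t (pderiv (true :: w) u t x).
Proof.
  intros Hu Ht. destruct (Hu w t x Ht) as (Hdt & Hdx & _).
  split; apply Derive_correct; assumption.
Qed.

Lemma smooth_mixed_partials u t x :
  smooth_halfplane u -> 0 < t ->
  partial_t (partial_x u) t x = partial_x (partial_t u) t x.
Proof.
  intros Hu Ht. apply (Schwarz u t x).
  - exists (mkposreal t Ht). intros s y Hs _. simpl in Hs.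
    assert (Hs0 : 0 < s) by (apply Rabs_lt_between in Hs; lra).
    destruct (Hu [] s y Hs0) as (A1 & A2 & _).
    destruct (Hu [false] s y Hs0) as (B1 & _ & _).
    destruct (Hu [true] s y Hs0) as (_ & C2 & _).
    repeat split; assumption.
  - apply continuity_2d_pt_filterlim. exact (proj2 (proj2 (Hu [true; false] t x Ht))).
  - apply continuity_2d_pt_filterlim. exact (proj2 (proj2 (Hu [false; true] t x Ht))).
Qed.

Lemma partial_x_of_pde f u t x :
  smooth1 f -> smooth_halfplane u -> 0 < t ->
  (forall y, partial_t u t y = partial_x (partial_x u) t y + Derive f (u t y) * partial_x u t y) ->
  partial_x (partial_t u) t x
    = partial_x (partial_x (partial_x u)) t x
      + Derive (Derive f) (u t x) * partial_x u t x * partial_x u t x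
      + Derive f (u t x) * partial_x (partial_x u) t x.
Proof.
  intros Hf Hu Ht Hpde. unfold partial_x at 1.
  rewrite (Derive_ext (fun y => partial_t u t y) _ x Hpde).
  destruct (smooth_is_derive u [] t x Hu Ht) as [Du _].
  destruct (smooth_is_derive u [false] t x Hu Ht) as [Dux _].
  destruct (smooth_is_derive u [false; false] t x Hu Ht) as [Duxx _].
  pose proof (Derive_correct _ _ (Hf 1%nat (u t x))) as Df.
  change (Derive_n f 1) with (Derive f) in Df.
  pose proof (is_derive_plus _ _ x _ _ Duxx
    (is_derive_mult (fun y => Derive f (u t y)) (fun y => partial_x u t y) x _ _
       (is_derive_comp (Derive f) (fun y => u t y) x _ _ Df Du) Dux Rmult_comm)) as HD.
  apply is_derive_unique.
  match type of HD with is_derive _ _ ?v => match goal with |- is_derive _ _ ?w =>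
    replace w with v by (unfold plus, mult, scal; simpl; unfold mult; simpl; ring) end end.
  exact HD.
Qed.

Lemma continuous_near (g : R -> R -> R) t0 x0 eps :
  continuous (fun p : R * R => g (fst p) (snd p)) (t0, x0) -> 0 < eps ->
  exists e, 0 < e /\ forall t x, Rabs (t - t0) < e -> Rabs (x - x0) < e ->
    Rabs (g t x - g t0 x0) < eps.
Proof.
  intros H Heps. apply continuity_2d_pt_filterlim in H.
  destruct (H (mkposreal eps Heps)) as [d Hd].
  exists d. split; [apply cond_pos | intros; apply Hd; auto].
Qed.

Lemma smooth_jet_locally_bounded u t0 x0 (ws : list (list bool)) :
  smooth_halfplane u -> 0 < t0 ->
  exists rho M, 0 < rho /\ 0 <= M /\ forall w t x, In w ws ->
    Rabs (t - t0) < rho -> Rabs (x - x0) < rho -> Rabs (pderiv w u t x) <= M.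
Proof.
  intros Hu Ht0. induction ws as [|w ws IH].
  - exists 1, 0. split; [lra|]. split; [lra|]. intros w t x [].
  - destruct IH as (rho & M & Hrho & HM & Hb).
    destruct (continuous_near (pderiv w u) t0 x0 1 (proj2 (proj2 (Hu w t0 x0 Ht0))) Rlt_0_1)
      as (e & He & Hw).
    exists (Rmin rho e), (Rmax M (Rabs (pderiv w u t0 x0) + 1)).
    split; [apply Rmin_pos; lra|]. split; [apply Rle_trans with M; [lra | apply Rmax_l]|].
    pose proof (Rmin_l rho e). pose proof (Rmin_r rho e).
    intros w' t x [<- | Hin] Ht Hx.
    + specialize (Hw t x ltac:(lra) ltac:(lra)).
      pose proof (Rabs_triang_inv (pderiv w u t x) (pderiv w u t0 x0)).
      apply Rle_trans with (Rabs (pderiv w u t0 x0) + 1); [lra | apply Rmax_r].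
    + apply Rle_trans with M; [apply Hb; auto; lra | apply Rmax_l].
Qed.

Lemma smooth_fold_jet u t0 xi0 a b :
  smooth_halfplane u -> 0 < t0 -> a <> 0 ->
  u t0 xi0 = 0 -> partial_x u t0 xi0 = 0 -> partial_x (partial_x u) t0 xi0 = 0 ->
  partial_x (partial_x (partial_x u)) t0 xi0 = a -> partial_t u t0 xi0 = 0 ->
  partial_t (partial_t u) t0 xi0 = b -> partial_t (partial_x u) t0 xi0 = a ->
  exists rho M, rho <= t0 /\ fold_jet (fun w => pderiv w u) t0 xi0 rho M a b.
Proof.
  intros Hu Ht0 Ha H0 H1 H2 H3 Ht Htt Htx.
  destruct (smooth_jet_locally_bounded u t0 xi0
              [[false; false; false; false]; [true; true; true]; [true; true; false];
               [true; false; false]; [true; false; false; false]] Hu Ht0)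
    as (rho1 & M & Hrho1 & HM & Hb).
  destruct (continuous_near (pderiv [false; false; false] u) t0 xi0 (Rabs a / 2)
              (proj2 (proj2 (Hu _ t0 xi0 Ht0))) ltac:(pose proof (Rabs_pos_lt a Ha); lra))
    as (rho2 & Hrho2 & Hxxx).
  set (rho := Rmin t0 (Rmin rho1 rho2)).
  assert (Hr : 0 < rho /\ rho <= t0 /\ rho <= rho1 /\ rho <= rho2).
  { unfold rho. pose proof (Rmin_l rho1 rho2). pose proof (Rmin_r rho1 rho2).
    pose proof (Rmin_l t0 (Rmin rho1 rho2)). pose proof (Rmin_r t0 (Rmin rho1 rho2)).
    repeat split; try lra. repeat apply Rmin_pos; lra. }
  assert (Hpos : forall t, Rabs (t - t0) < rho -> 0 < t)
    by (intros t Ht'; apply Rabs_lt_between in Ht'; lra).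
  exists rho, M. split; [lra|]. split; auto; try lra.
  - intros w t x Ht'. exact (proj1 (smooth_is_derive u w t x Hu (Hpos t Ht'))).
  - intros w t x Ht'. exact (proj2 (smooth_is_derive u w t x Hu (Hpos t Ht'))).
  - intros w t x Hw Ht' Hx. apply Hb; auto; lra.
  - intros t x Ht' Hx. pose proof (Hxxx t x ltac:(lra) ltac:(lra)) as Hx3.
    change (pderiv [false; false; false] u t0 xi0)
      with (partial_x (partial_x (partial_x u)) t0 xi0) in Hx3.
    rewrite H3 in Hx3. cbv beta. lra.
Qed.

Theorem proposition4p2
  (f u0 : R -> R) (u : R -> R -> R) (t0 xi0 : R)
  (Hf : smooth1 f) (Hf0 : Derive f 0 = 0)
  (Hu0 : smooth_bounded u0)
  (Hu : smooth_halfplane u)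
  (Hpde : forall t x, 0 < t ->
     partial_t u t x = partial_x (partial_x u) t x + Derive f (u t x) * partial_x u t x)
  (Hinit : forall x, filterlim (fun t => u t x) (at_right 0) (locally (u0 x)))
  (Ht0 : 0 < t0)
  (Hz0 : u t0 xi0 = 0)
  (Hz1 : partial_x u t0 xi0 = 0)
  (Hz2 : partial_x (partial_x u) t0 xi0 = 0)
  (Hz3 : partial_x (partial_x (partial_x u)) t0 xi0 <> 0) :
  let a := partial_x (partial_x (partial_x u)) t0 xi0 in
  let b := partial_t (partial_t u) t0 xi0 in
  exists (delta eps C : R) (xi1 xi2 xi : R -> R),
    0 < delta /\ delta < t0 /\ 0 < eps /\ 0 <= C /\
    (* t < t0 : exactly three roots near xi0 *)
    (forall t, t0 - delta < t < t0 ->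
       xi1 t <> xi2 t /\ xi1 t <> xi t /\ xi2 t <> xi t /\
       forall x, (Rabs (x - xi0) < eps /\ u t x = 0) <->
                 (x = xi1 t \/ x = xi2 t \/ x = xi t)) /\
    (* t >= t0 : exactly one root near xi0, the continuation of xi *)
    (forall t, t0 <= t < t0 + delta ->
       forall x, (Rabs (x - xi0) < eps /\ u t x = 0) <-> x = xi t) /\
    (* asymptotics of the two disappearing roots as t -> t0^- *)
    (forall t, t0 - delta < t < t0 ->
       Rabs (xi1 t - xi0 - sqrt (6 * (t0 - t))) <= C * (t0 - t) /\
       Rabs (xi2 t - xi0 + sqrt (6 * (t0 - t))) <= C * (t0 - t) /\
       Rabs (partial_x u t (xi1 t) - 2 * a * (t0 - t))
         <= C * ((t0 - t) * sqrt (t0 - t)) /\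
       Rabs (partial_x u t (xi2 t) - 2 * a * (t0 - t))
         <= C * ((t0 - t) * sqrt (t0 - t))) /\
    (* asymptotics of the continued root as t -> t0 *)
    (forall t, Rabs (t - t0) < delta ->
       Rabs (xi t - xi0 - b / (2 * a) * (t0 - t)) <= C * (t0 - t) ^ 2 /\
       Rabs (partial_x u t (xi t) - a * (t - t0)) <= C * (t0 - t) ^ 2).

Proof.
  intros a b.
  assert (Hut : partial_t u t0 xi0 = 0) by (rewrite Hpde, Hz1, Hz2 by lra; ring).
  assert (Hutx : partial_t (partial_x u) t0 xi0 = a).
  { rewrite smooth_mixed_partials, (partial_x_of_pde f) by (auto; intros; apply Hpde; lra).
    rewrite Hz1, Hz2. unfold a. ring. }
  destruct (smooth_fold_jet u t0 xi0 a b Hu Ht0 Hz3 Hz0 Hz1 Hz2 eq_refl Hut eq_refl Hutx)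
    as (rho & M & Hrho & HD).
  exact (fold_bifurcation_of_jet _ _ _ _ _ _ _ HD Hrho Hz3).
Qed.
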